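(* Let $\rho:\mathbb{Z}\to[0,\infty)$ be a weight with finite moments, i.e. $\sum_{x\in\mathbb{Z}}|x|^k\rho(x)<\infty$ for all $k\ge 0$, and let $f,g$ be polynomials satisfying the discrete Pearson equation $$f(x+1)\rho(x+1)-f(x)\rho(x)=g(x)\rho(x)\qquad (x\in\mathbb{Z})$$ (equivalently $\rho(x+1)/\rho(x)=(f(x)+g(x))/f(x+1)$ where $\rho(x)\neq 0$). Assume that $\rho(x)f(x)$ vanishes at the end points of the support of $\rho$. Define the operator on polynomials $$\mathcal{A}_{\rm l}=g(x)T+f(x)(\Delta+\nabla),$$ where $T\phi(x)=\phi(x+1)$, $\Delta\phi(x)=\phi(x+1)-\phi(x)$, $\nabla\phi(x)=\phi(x)-\phi(x-1)$. For real polynomials $\phi,\psi$ let $\langle\phi,\psi\rangle=\sum_{x\in\mathbb{Z}}\phi(x)\psi(x)\rho(x)$ and, for a weight $\omega$, $\langle\phi,\psi\rangle_{s,\omega}=\sum_{x\in\mathbb{Z}}[\phi(x)\psi(x+1)-\phi(x+1)\psi(x)]\omega(x)$. Then for all real polynomials $\phi,\psi$: (1) $\langle\mathcal{A}_{\rm l}\phi,\psi\rangle=-\langle\phi,\mathcal{A}_{\rm l}\psi\rangle$; (2) $\langle\phi,\mathcal{A}_{\rm l}\psi\rangle=\langle\phi,\psi\rangle_{s,\omega}$ with $\omega(x)=f(x+1)\rho(x+1)$.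
   Context: All sums are over the integer lattice $\mathbb{Z}$, with $\rho$ taken to be zero outside its support. *)

From Stdlib Require Import Reals ZArith.
From Coquelicot Require Import Coquelicot.
From mathcomp Require Import all_boot all_algebra.
From mathcomp Require Import Rstruct.

Set Implicit Arguments.
Unset Strict Implicit.

Local Open Scope R_scope.

Definition summableZ (h : Z -> R) : Prop :=
  ex_series (fun n : nat => Rabs (h (Z.of_nat n))) /\
  ex_series (fun n : nat => Rabs (h (Z.opp (Z.of_nat (S n))))).

Definition sumZ (h : Z -> R) : R :=
  Series (fun n : nat => h (Z.of_nat n)) +
  Series (fun n : nat => h (Z.opp (Z.of_nat (S n)))).

Definition pZ (p : {poly R}) : Z -> R := fun x => horner p (IZR x).

Definition Tsh (h : Z -> R) : Z -> R := fun x => h (Z.add x 1).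
Definition Dfw (h : Z -> R) : Z -> R := fun x => h (Z.add x 1) - h x.
Definition Dbw (h : Z -> R) : Z -> R := fun x => h x - h (Z.sub x 1).

Definition Al (f g phi : {poly R}) : Z -> R :=
  fun x => pZ g x * Tsh (pZ phi) x + pZ f x * (Dfw (pZ phi) x + Dbw (pZ phi) x).

Definition ipr (rho : Z -> R) (phi psi : Z -> R) : R :=
  sumZ (fun x => phi x * psi x * rho x).

Definition ips (omega : Z -> R) (phi psi : Z -> R) : R :=
  sumZ (fun x => (phi x * psi (Z.add x 1) - phi (Z.add x 1) * psi x) * omega x).

From Stdlib Require Import Reals ZArith Lra Lia.
From Coquelicot Require Import Coquelicot.
From mathcomp Require Import all_boot all_algebra.
From mathcomp Require Import Rstruct.

(* By the Pearson equation, phi(x) (A_l psi)(x) rho(x) telescopes to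
   C phi psi (x+1) - C psi phi x, where C phi psi x = phi(x-1) psi(x) f(x) rho(x).
   The finite moments of rho make every C phi psi absolutely summable over Z, and
   the sum over Z of an absolutely summable function is translation invariant, so
   <phi, A_l psi> = sum C phi psi - sum C psi phi with no boundary terms.  This
   expression is antisymmetric in (phi, psi), and the shifted form of the same
   difference is exactly the integrand of <phi, psi>_{s,omega}. *)

Set Implicit Arguments.
Unset Strict Implicit.
Local Open Scope R_scope.

Lemma summableZ_ext (h1 h2 : Z -> R) :
  (forall x, h1 x = h2 x) -> summableZ h1 -> summableZ h2.
Proof.
by move=> E [S1 S2]; split; [apply: ex_series_ext S1 | apply: ex_series_ext S2]
  => n; rewrite E.
Qed.

Lemma summableZ_le (h1 h2 : Z -> R) :
  (forall x, Rabs (h1 x) <= Rabs (h2 x)) -> summableZ h2 -> summableZ h1.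
Proof.
by move=> E [S1 S2]; split; [apply: ex_series_le S1 | apply: ex_series_le S2]
  => n; rewrite /norm /= /abs /= Rabs_Rabsolu.
Qed.

Lemma summableZ_plus (h1 h2 : Z -> R) :
  summableZ h1 -> summableZ h2 -> summableZ (fun x => h1 x + h2 x).
Proof.
move=> [S1 S2] [S3 S4]; split.
- apply: ex_series_le (ex_series_plus _ _ S1 S3) => n.
  by rewrite /norm /= /abs /= Rabs_Rabsolu; apply: Rabs_triang.
- apply: ex_series_le (ex_series_plus _ _ S2 S4) => n.
  by rewrite /norm /= /abs /= Rabs_Rabsolu; apply: Rabs_triang.
Qed.

Lemma summableZ_scal (c : R) (h : Z -> R) :
  summableZ h -> summableZ (fun x => c * h x).
Proof.
by move=> [S1 S2]; split;
  [apply: ex_series_ext (ex_series_scal_l (Rabs c) _ S1)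
  |apply: ex_series_ext (ex_series_scal_l (Rabs c) _ S2)] => n; rewrite Rabs_mult.
Qed.

Lemma summableZ_shift (h : Z -> R) :
  summableZ h -> summableZ (fun x => h (Z.add x 1)).
Proof.
move=> [S1 S2]; split.
- move/ex_series_incr_1: S1; apply: ex_series_ext => n.
  by congr (Rabs (h _)); lia.
- apply/ex_series_incr_1; apply: ex_series_ext S2 => n.
  by congr (Rabs (h _)); lia.
Qed.

Lemma ex_series_nonneg_part (h : Z -> R) :
  summableZ h -> ex_series (fun n : nat => h (Z.of_nat n)).
Proof. by case=> S _; apply: ex_series_Rabs. Qed.

Lemma ex_series_neg_part (h : Z -> R) :
  summableZ h -> ex_series (fun n : nat => h (Z.opp (Z.of_nat n.+1))).
Proof. by case=> _ S; apply: ex_series_Rabs. Qed.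

Lemma sumZ_ext (h1 h2 : Z -> R) : (forall x, h1 x = h2 x) -> sumZ h1 = sumZ h2.
Proof. by move=> E; rewrite /sumZ; congr (_ + _); apply: Series_ext => n. Qed.

Lemma sumZ_minus (h1 h2 : Z -> R) : summableZ h1 -> summableZ h2 ->
  sumZ (fun x => h1 x - h2 x) = sumZ h1 - sumZ h2.
Proof.
move=> S1 S2; rewrite /sumZ.
rewrite (Series_minus _ _ (ex_series_nonneg_part S1) (ex_series_nonneg_part S2)).
rewrite (Series_minus _ _ (ex_series_neg_part S1) (ex_series_neg_part S2)).
lra.
Qed.

Lemma sumZ_shift (h : Z -> R) : summableZ h -> sumZ (fun x => h (Z.add x 1)) = sumZ h.
Proof.
move=> Sh; rewrite /sumZ.
rewrite (Series_incr_1 _ (ex_series_nonneg_part Sh)).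
rewrite (Series_incr_1 _ (ex_series_neg_part (summableZ_shift Sh))).
rewrite (Series_ext (fun k => h (Z.add (Z.opp (Z.of_nat k.+2)) 1))
                   (fun k => h (Z.opp (Z.of_nat k.+1))));
  last by move=> n; congr (h _); lia.
rewrite (Series_ext (fun k => h (Z.of_nat k.+1))
                   (fun k => h (Z.add (Z.of_nat k) 1)));
  last by move=> n; congr (h _); lia.
have -> : h (Z.add (Z.opp (Z.of_nat 1)) 1) = h (Z.of_nat 0) by [].
lra.
Qed.

Lemma sumZ_shift_minus (h1 h2 : Z -> R) : summableZ h1 -> summableZ h2 ->
  sumZ (fun x => h1 (Z.add x 1) - h2 x) = sumZ h1 - sumZ h2.
Proof.
move=> S1 S2.
by rewrite sumZ_minus ?sumZ_shift //; apply: summableZ_shift.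
Qed.

Lemma pZ_mul (p q : {poly R}) (x : Z) : pZ (p * q)%R x = pZ p x * pZ q x.
Proof. exact: hornerM. Qed.

Lemma pZ_MXaddC (p : {poly R}) (c : R) (x : Z) :
  pZ (p * 'X + c%:P)%R x = pZ p x * IZR x + c.
Proof. exact: hornerMXaddC. Qed.

Lemma pZ_comp_pred (p : {poly R}) (x : Z) :
  pZ (p \Po ('X - 1))%R x = pZ p (Z.sub x 1).
Proof. by rewrite /pZ horner_comp hornerXsubC minus_IZR. Qed.

Lemma ipr_sym (rho phi psi : Z -> R) : ipr rho phi psi = ipr rho psi phi.
Proof. by apply: sumZ_ext => x; rewrite (Rmult_comm (phi x)). Qed.

Section WeightWithFiniteMoments.

Variable rho : Z -> R.
Hypothesis rho_moments :
  forall k : nat, summableZ (fun x => Rabs (IZR x) ^ k * rho x).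

Lemma summableZ_moment_poly (P : {poly R}) (k : nat) :
  summableZ (fun x => Rabs (IZR x) ^ k * pZ P x * rho x).
Proof.
elim/poly_ind: P k => [|p c IH] k.
  apply: summableZ_le (rho_moments k) => x.
  by rewrite /pZ horner0 Rmult_0_r Rmult_0_l Rabs_R0; apply: Rabs_pos.
apply: (@summableZ_ext (fun x => Rabs (IZR x) ^ k * IZR x * pZ p x * rho x
                                 + c * (Rabs (IZR x) ^ k * rho x))).
  by move=> x; rewrite pZ_MXaddC; ring.
apply: summableZ_plus; last exact: summableZ_scal.
apply: summableZ_le (IH k.+1) => x.
rewrite !Rabs_mult /= Rabs_Rabsolu (Rabs_pos_eq (Rabs (IZR x) ^ k));
  last by apply: pow_le; apply: Rabs_pos.
by right; ring.
Qed.

Lemma summableZ_poly (P : {poly R}) : summableZ (fun x => pZ P x * rho x).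
Proof.
apply: summableZ_ext (summableZ_moment_poly P 0) => x.
by rewrite pow_O Rmult_1_l.
Qed.

Variables f g : {poly R}.

Definition cross (phi psi : {poly R}) (x : Z) : R :=
  pZ phi (Z.sub x 1) * pZ psi x * pZ f x * rho x.

Lemma summableZ_cross (phi psi : {poly R}) : summableZ (cross phi psi).
Proof.
have S := summableZ_poly ((phi \Po ('X - 1)) * psi * f)%R.
apply: summableZ_ext S => x.
by rewrite /cross !pZ_mul pZ_comp_pred.
Qed.

Hypothesis pearson : forall x : Z,
  pZ f (Z.add x 1) * rho (Z.add x 1) - pZ f x * rho x = pZ g x * rho x.

Lemma Al_telescope (phi psi : {poly R}) (x : Z) :
  pZ phi x * Al f g psi x * rho x = cross phi psi (Z.add x 1) - cross psi phi x.
Proof.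
have flux : pZ f (Z.add x 1) * rho (Z.add x 1) = pZ g x * rho x + pZ f x * rho x.
  by have := pearson x; lra.
rewrite /Al /Tsh /Dfw /Dbw /cross.
have -> : Z.sub (Z.add x 1) 1 = x by lia.
have -> : pZ phi x * pZ psi (Z.add x 1) * pZ f (Z.add x 1) * rho (Z.add x 1)
  = pZ phi x * pZ psi (Z.add x 1) * (pZ g x * rho x + pZ f x * rho x)
  by rewrite -flux; ring.
ring.
Qed.

Lemma ips_cross (phi psi : {poly R}) :
  ips (fun x => pZ f (Z.add x 1) * rho (Z.add x 1)) (pZ phi) (pZ psi)
  = sumZ (cross phi psi) - sumZ (cross psi phi).
Proof.
rewrite -(sumZ_shift (summableZ_cross phi psi)) -(sumZ_shift (summableZ_cross psi phi)).
rewrite -sumZ_minus; [|by apply: summableZ_shift; apply: summableZ_cross..].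
apply: sumZ_ext => x; rewrite /cross.
have -> : Z.sub (Z.add x 1) 1 = x by lia.
ring.
Qed.

Lemma ipr_Al_r (phi psi : {poly R}) :
  ipr rho (pZ phi) (Al f g psi) = sumZ (cross phi psi) - sumZ (cross psi phi).
Proof.
rewrite -sumZ_shift_minus; [|exact: summableZ_cross..].
by apply: sumZ_ext => x; apply: Al_telescope.
Qed.

End WeightWithFiniteMoments.

Theorem proposition3p6 (rho : Z -> R) (f g : {poly R})
  (rho_nonneg : forall x : Z, 0 <= rho x)
  (rho_moments : forall k : nat, summableZ (fun x => Rabs (IZR x) ^ k * rho x))
  (pearson : forall x : Z,
      pZ f (Z.add x 1) * rho (Z.add x 1) - pZ f x * rho x = pZ g x * rho x)
  (boundary : forall x : Z, rho (Z.sub x 1) = 0 -> pZ f x * rho x = 0) :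
  forall phi psi : {poly R},
    ipr rho (Al f g phi) (pZ psi) = - ipr rho (pZ phi) (Al f g psi) /\
    ipr rho (pZ phi) (Al f g psi) =
      ips (fun x => pZ f (Z.add x 1) * rho (Z.add x 1)) (pZ phi) (pZ psi).
Proof.
move=> phi psi.
have Al_r := ipr_Al_r rho_moments pearson.
rewrite ipr_sym !Al_r (ips_cross rho_moments f).
by split; ring.
Qed.
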